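(* Let $(\tau_\Sigma,\mathbb{B}_\Sigma)_\Sigma$ be a family indexed by the finite sets $\Sigma$ with at least two elements, where $\tau_\Sigma$ is a topology on $\Sigma^{\mathbb{N}}$ and $\mathbb{B}_\Sigma$ is a basis of $\tau_\Sigma$, satisfying: (P1) $\mathbb{B}_\Sigma$ contains every set $N_w$, $w\in\Sigma^*$; (P2) $\mathbb{B}_\Sigma$ is closed under finite unions and finite intersections; (P3) if $\Gamma$ is a finite set with at least two elements and $L\in\mathbb{B}_{\Sigma\times\Gamma}$, then $\pi_0[L]\in\mathbb{B}_\Sigma$; (P4) for each $L\in\mathbb{B}_\Sigma$ there is $C\in\mathbb{B}_{\Sigma\times 2}$ with $C\subseteq\Sigma^{\mathbb{N}}\times\mathbb{P}_\infty$, $C$ closed in $\Sigma^{\mathbb{N}}\times\mathbb{P}_\infty$ (i.e. $C=F\cap(\Sigma^{\mathbb{N}}\times\mathbb{P}_\infty)$ for some $\tau_C$-closed $F\subseteq\Sigma^{\mathbb{N}}\times 2^{\mathbb{N}}$), and $L=\pi_0[C]$. Then every topology $\tau_\Sigma$ is strong Choquet.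
   Context: $N_w=\{\sigma\in\Sigma^{\mathbb{N}}: w\text{ prefix of }\sigma\}$; $\tau_C$ denotes the product-of-discrete (Cantor) topology. $2=\{0,1\}$ and $\mathbb{P}_\infty=\{\alpha\in 2^{\mathbb{N}}: \alpha(i)=1\text{ for infinitely many } i\}$. The space $\Sigma^{\mathbb{N}}\times\Gamma^{\mathbb{N}}$ is identified with $(\Sigma\times\Gamma)^{\mathbb{N}}$ via $(\sigma,\gamma)\mapsto((\sigma(n),\gamma(n)))_n$, and $\pi_0$ is the projection onto the first coordinate. Strong Choquet game on a space $X$: Player 1 plays an open $U_i$ and $x_i\in U_i$ with $U_i\subseteq V_{i-1}$; Player 2 plays an open $V_i$ with $x_i\in V_i\subseteq U_i$; Player 2 wins if $\bigcap_i V_i\neq\emptyset$. $X$ is strong Choquet if it is nonempty and Player 2 has a winning strategy. *)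

From HB Require Import structures.
From mathcomp Require Import all_boot.
Set Implicit Arguments. Unset Strict Implicit. Unset Printing Implicit Defensive.

Definition pset (X : Type) := X -> Prop.
Definition psubset (X : Type) (A B : pset X) := forall x, A x -> B x.

Definition is_topology (X : Type) (tau : pset (pset X)) : Prop :=
  tau (fun _ => True) /\
  (forall F : pset (pset X), (forall U, F U -> tau U) ->
     tau (fun x => exists U, F U /\ U x)) /\
  (forall U V, tau U -> tau V -> tau (fun x => U x /\ V x)).

Definition is_basis (X : Type) (tau B : pset (pset X)) : Prop :=
  (forall b, B b -> tau b) /\
  (forall U, tau U -> forall x, U x -> exists b, B b /\ b x /\ psubset b U).

Definition cyl (S : Type) (w : seq S) : pset (nat -> S) :=
  fun sigma => [seq sigma i | i <- iota 0 (size w)] = w.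

(* Projection pi_0 of (S x G)^N = S^N x G^N onto S^N, and image of a set. *)
Definition pi0 (S G : Type) (z : nat -> S * G) : nat -> S := fun n => (z n).1.
Definition proj0 (S G : Type) (L : pset (nat -> S * G)) : pset (nat -> S) :=
  fun sigma => exists z, L z /\ pi0 z = sigma.
Definition pi1 (S G : Type) (z : nat -> S * G) : nat -> G := fun n => (z n).2.

Definition Pinf (alpha : nat -> bool) : Prop :=
  forall n, exists i, n <= i /\ alpha i = true.

Definition cantor_open (A : Type) (U : pset (nat -> A)) : Prop :=
  forall x, U x -> exists n, forall y, (forall i, i < n -> y i = x i) -> U y.
Definition cantor_closed (A : Type) (F : pset (nat -> A)) : Prop :=
  cantor_open (fun x => ~ F x).

(* Strong Choquet game on (X, tau).  Player 1's i-th move is a pair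
   (U_i, x_i); a strategy for player 2 maps the finite history of
   player 1's moves (U_0,x_0),...,(U_i,x_i) to V_i. *)
Definition p2_response (X : Type) (s : seq (pset X * X) -> pset X)
  (m : nat -> pset X * X) (i : nat) : pset X :=
  s [seq m j | j <- iota 0 i.+1].

Definition p1_legal (X : Type) (tau : pset (pset X))
  (s : seq (pset X * X) -> pset X) (m : nat -> pset X * X) (i : nat) : Prop :=
  tau (m i).1 /\ (m i).1 (m i).2 /\
  (0 < i -> psubset (m i).1 (p2_response s m i.-1)).

Definition p2_legal (X : Type) (tau : pset (pset X))
  (s : seq (pset X * X) -> pset X) (m : nat -> pset X * X) (i : nat) : Prop :=
  let V := p2_response s m i in
  tau V /\ V (m i).2 /\ psubset V (m i).1.

Definition p2_winning_strategy (X : Type) (tau : pset (pset X))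
  (s : seq (pset X * X) -> pset X) : Prop :=
  (forall m k, (forall j, j <= k -> p1_legal tau s m j) -> p2_legal tau s m k) /\
  (forall m, (forall j, p1_legal tau s m j) ->
     exists x, forall i, p2_response s m i x).

Definition strong_choquet (X : Type) (tau : pset (pset X)) : Prop :=
  inhabited X /\ exists s, p2_winning_strategy tau s.

(* Player 2 keeps, for every earlier move (U_j, x_j) of player 1, a set C_j of
   B_{Sigma x 2} given by (P4) with x_j in pi_0[C_j] and pi_0[C_j] contained in
   U_j, together with a finite word w_j over Sigma x 2, and answers with the
   intersection of the sets pi_0[C_j cap N_{w_j}], which are basic by (P1)-(P3).
   The next point of player 1 lies in all of them, and since the second
   coordinates of points of C_j have infinitely many ones, every w_j can then be
   lengthened to a word that contains a new one and still meets the answer.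
   In the limit w_j converges to some z_j whose second coordinate lies in
   P_infty and all of whose prefixes extend into C_j; as C_j is closed in
   Sigma^N x P_infty, z_j lies in C_j.  The first coordinate of z_j is the
   common limit of player 1's points, hence does not depend on j and lies in
   every answer of player 2. *)
From Stdlib Require Import ClassicalEpsilon FunctionalExtensionality PropExtensionality Classical.
From HB Require Import structures.
From mathcomp Require Import all_boot.

Set Implicit Arguments.
Unset Strict Implicit.
Unset Printing Implicit Defensive.

Lemma cylP (A : Type) (d : A) (w : seq A) (z : nat -> A) :
  cyl w z <-> forall k, k < size w -> z k = nth d w k.
Proof.
change (mkseq z (size w) = w <-> forall k, k < size w -> z k = nth d w k).
split=> [wz k hk | wz]; first by rewrite -wz nth_mkseq.
apply: (@eq_from_nth _ d); rewrite ?size_mkseq // => k hk.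
by rewrite nth_mkseq ?wz.
Qed.

Lemma cyl_mkseq (A : Type) (z : nat -> A) n : cyl (mkseq z n) z.
Proof. by rewrite /cyl size_mkseq. Qed.

Lemma prefix_mkseq (A : eqType) (f : nat -> A) n n' :
  n <= n' -> prefix (mkseq f n) (mkseq f n').
Proof. by move=> le_nn'; rewrite prefixE size_mkseq /mkseq -map_take take_iota (minn_idPl _). Qed.

Lemma nth_prefix (A : eqType) (d : A) s t k :
  prefix s t -> k < size s -> nth d t k = nth d s k.
Proof. by move=> /prefixP[r ->] hk; rewrite nth_cat hk. Qed.

Lemma mem_cantor_closed (A : Type) (F : pset (nat -> A)) x : cantor_closed F ->
  (forall n, exists y, F y /\ forall i, i < n -> y i = x i) -> F x.
Proof.
move=> Fcl Fx; apply: NNPP => nFx; have [n Fn] := Fcl x nFx.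
by have [y [Fy yx]] := Fx n; exact: Fn y yx Fy.
Qed.

Definition Pinf_closed (A : Type) (C : pset (nat -> A * bool)) : Prop :=
  exists2 F, cantor_closed F & forall z, C z <-> F z /\ Pinf (pi1 z).

Lemma Pinf_closed_Pinf (A : Type) (C : pset (nat -> A * bool)) z :
  Pinf_closed C -> C z -> Pinf (pi1 z).
Proof. by case=> F _ CF /CF[]. Qed.

Lemma mem_Pinf_closed (A : Type) (C : pset (nat -> A * bool)) z :
  Pinf_closed C -> Pinf (pi1 z) ->
  (forall n, exists y, C y /\ forall i, i < n -> y i = z i) -> C z.
Proof.
case=> F Fcl CF zPinf zC; apply/CF; split=> //.
apply: mem_cantor_closed Fcl _ => n; have [y [/CF[Fy _] yz]] := zC n.
by exists y.
Qed.

Lemma bigI_closed (X : Type) (B : pset (pset X)) (P : nat -> pset X) k :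
  (forall L1 L2, B L1 -> B L2 -> B (fun x => L1 x /\ L2 x)) ->
  (forall j, j <= k -> B (P j)) -> B (fun x => forall j, j <= k -> P j x).
Proof.
move=> BI; elim: k => [|k IHk] BP.
  suff -> : (fun x => forall j, j <= 0 -> P j x) = P 0 by exact: BP.
  apply: functional_extensionality => x; apply: propositional_extensionality.
  by split=> [/(_ 0 (leqnn 0)) | Px j]; last rewrite leqn0 => /eqP->.
suff -> : (fun x => forall j, j <= k.+1 -> P j x) =
          (fun x => (forall j, j <= k -> P j x) /\ P k.+1 x).
  by apply: BI; [apply: IHk => j /leqW /BP | exact: BP].
apply: functional_extensionality => x; apply: propositional_extensionality.
split=> [Px | [Px Pkx] j]; first by split=> [j /leqW|]; apply: Px.
by rewrite leq_eqVlt ltnS => /orP[/eqP-> | /Px].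
Qed.

Section WordChain.
Variables (A : eqType) (d : A) (ws : nat -> seq A).
Hypothesis ws_prefix : forall n, prefix (ws n) (ws n.+1).
Hypothesis ws_grow : forall n, size (ws n) < size (ws n.+1).

Lemma size_chain n : n <= size (ws n).
Proof. by elim: n => // n IHn; exact: leq_ltn_trans IHn (ws_grow n). Qed.

Lemma chain_prefix n n' : n <= n' -> prefix (ws n) (ws n').
Proof.
move/subnKC <-; elim: (n' - n) => [|p IHp]; first by rewrite addn0 prefix_refl.
by rewrite addnS; exact: prefix_trans IHp (ws_prefix _).
Qed.

Definition chain_lim (k : nat) : A := nth d (ws k.+1) k.

Lemma chain_limE n k : k < size (ws n) -> chain_lim k = nth d (ws n) k.
Proof.
move=> hk; rewrite /chain_lim -(nth_prefix d (chain_prefix (leq_maxl n k.+1)) hk).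
by rewrite (nth_prefix d (chain_prefix (leq_maxr n k.+1)) (size_chain k.+1)).
Qed.

Lemma cyl_chain_lim n : cyl (ws n) chain_lim.
Proof. by apply/(cylP d) => k /chain_limE. Qed.
End WordChain.

Section StrongChoquet.
Variables (S : eqType) (s0 : S).
Local Notation X := (nat -> S).
Local Notation Z := (nat -> S * bool).
Variables (tau B : pset (pset X)) (B2 : pset (pset Z)).
Hypothesis B_basis : is_basis tau B.
Hypothesis BI : forall L1 L2, B L1 -> B L2 -> B (fun x => L1 x /\ L2 x).
Hypothesis B_proj0 : forall C, B2 C -> B (proj0 C).
Hypothesis B2I_cyl : forall C w, B2 C -> B2 (fun z => C z /\ cyl w z).
Hypothesis B_code : forall L, B L ->
  exists2 C, B2 C & Pinf_closed C /\ forall x, L x <-> proj0 C x.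

Local Notation d := (s0, false).

Definition proj_cyl (C : pset Z) (w : seq (S * bool)) : pset X :=
  proj0 (fun z => C z /\ cyl w z).

Definition code_for (U : pset X) (x : X) (C : pset Z) : Prop :=
  B2 C /\ Pinf_closed C /\ proj0 C x /\ psubset (proj0 C) U.

Lemma exists_code U x : tau U -> U x -> exists C, code_for U x C.
Proof.
move=> tauU Ux; have [L [BL [Lx LU]]] := proj2 B_basis U tauU x Ux.
have [C BC [Ccl LC]] := B_code BL.
by exists C; split; [|split; [|split; [apply/LC | move=> y /LC /LU]]].
Qed.

Definition code_of (u : pset X * X) : pset Z :=
  epsilon (inhabits (fun _ => False)) (code_for u.1 u.2).

Lemma code_ofP u : tau u.1 -> u.1 u.2 -> code_for u.1 u.2 (code_of u).
Proof. by move=> tauU Ux; apply: epsilon_spec; exact: exists_code. Qed.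

Definition extends (C : pset Z) (x : X) (w w' : seq (S * bool)) : Prop :=
  [/\ prefix w w', exists2 k, size w <= k < size w' & (nth d w' k).2
    & proj_cyl C w' x].

Lemma exists_extension C x w : (forall z, C z -> Pinf (pi1 z)) ->
  proj_cyl C w x -> exists w', extends C x w w'.
Proof.
move=> CPinf [z [[Cz wz] <-]]; have [k [wk zk]] := CPinf z Cz (size w).
exists (mkseq z k.+1); split.
- have wE : mkseq z (size w) = w := wz.
  by rewrite -wE; apply: prefix_mkseq; exact: leqW.
- by exists k; rewrite ?size_mkseq ?nth_mkseq ?wk ?ltnSn.
- by exists z; split=> //; split=> //; exact: cyl_mkseq.
Qed.

Definition extend C x w : seq (S * bool) := epsilon (inhabits w) (extends C x w).

Lemma extendP C x w : (forall z, C z -> Pinf (pi1 z)) ->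
  proj_cyl C w x -> extends C x w (extend C x w).
Proof. by move=> CPinf Cwx; apply: epsilon_spec; exact: exists_extension. Qed.

(* [word m j n.+1] is the word kept for the code of move j after answering move
   j + n; [word m j 0] is empty. *)
Fixpoint word (m : nat -> pset X * X) (j n : nat) : seq (S * bool) :=
  if n is n'.+1 then extend (code_of (m j)) (m (j + n')).2 (word m j n') else [::].

Definition response (m : nat -> pset X * X) (i : nat) : pset X :=
  fun x => forall j, j <= i -> proj_cyl (code_of (m j)) (word m j (i - j).+1) x.

Definition strategy (h : seq (pset X * X)) : pset X :=
  response (nth (fun _ => True, fun _ => s0) h) (size h).-1.

Lemma eq_word m m' j n : (forall i, i < j + n -> m i = m' i) ->
  word m j n = word m' j n.
Proof.
elim: n => [|n IHn] mm' //=; rewrite !mm' ?IHn // ?addnS ?ltnS ?leq_addr //.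
by move=> i lt_i; apply: mm'; rewrite addnS ltnS ltnW.
Qed.

Lemma p2_responseE m i : p2_response strategy m i = response m i.
Proof.
have mE n : n <= i -> nth (fun _ => True, fun _ => s0) (mkseq m i.+1) n = m n.
  by move=> le_ni; rewrite nth_mkseq.
rewrite /p2_response /strategy -/(mkseq m i.+1) size_mkseq /=.
apply: functional_extensionality => x; apply: propositional_extensionality.
have wE j : j <= i -> word (nth (fun _ => True, fun _ => s0) (mkseq m i.+1)) j (i - j).+1
                     = word m j (i - j).+1.
  by move=> le_ji; apply: eq_word => n; rewrite addnS subnKC // ltnS => /mE.
by split=> resp j le_ji; have := resp j le_ji; rewrite wE ?mE.
Qed.

Lemma code_of_legal m j : p1_legal tau strategy m j ->
  code_for (m j).1 (m j).2 (code_of (m j)).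
Proof. by case=> tauU [Ux _]; exact: code_ofP. Qed.

Lemma word_extends m j n : (forall i, i <= j + n -> p1_legal tau strategy m i) ->
  extends (code_of (m j)) (m (j + n)).2 (word m j n) (word m j n.+1).
Proof.
move=> legal; have [_ [Ccl [Cx _]]] := code_of_legal (legal j (leq_addr n j)).
apply: extendP => [z|]; first exact: Pinf_closed_Pinf.
case: n legal => [|n] legal.
  by rewrite addn0; case: Cx => z [Cz <-]; exists z.
have [_ [xU Usub]] := legal _ (leqnn _); rewrite addnS in xU Usub *.
move: (Usub isT _ xU); rewrite p2_responseE => /(_ j (leq_addr n j)).
by rewrite addKn.
Qed.

Lemma strategy_legal m k : (forall j, j <= k -> p1_legal tau strategy m j) ->
  p2_legal tau strategy m k.
Proof.
move=> legal; rewrite /p2_legal p2_responseE.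
have extk j : j <= k ->
    extends (code_of (m j)) (m k).2 (word m j (k - j)) (word m j (k - j).+1).
  by move=> le_jk; have := @word_extends m j (k - j); rewrite subnKC //; apply.
split; [|split].
- apply: (proj1 B_basis); apply: bigI_closed => // j le_jk.
  by apply/B_proj0/B2I_cyl; case: (code_of_legal (legal j le_jk)).
- by move=> j /extk[].
- move=> y /(_ k (leqnn k)) [z [[Cz _] <-]].
  have [_ [_ [_ CU]]] := code_of_legal (legal k (leqnn k)).
  by apply: CU; exists z.
Qed.

Section LegalRun.
Variable m : nat -> pset X * X.
Hypothesis legal : forall j, p1_legal tau strategy m j.

Let word_ext j n :
  extends (code_of (m j)) (m (j + n)).2 (word m j n) (word m j n.+1) :=
  word_extends (fun i _ => legal i).

Lemma word_prefix j n : prefix (word m j n) (word m j n.+1).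
Proof. by case: (word_ext j n). Qed.

Lemma word_grow j n : size (word m j n) < size (word m j n.+1).
Proof. by case: (word_ext j n) => _ [k /andP[le_k lt_k] _] _; exact: leq_ltn_trans le_k lt_k. Qed.

Definition lim_word j : Z := chain_lim d (word m j).

Lemma lim_wordE j n k : k < size (word m j n) -> lim_word j k = nth d (word m j n) k.
Proof. exact: (chain_limE d (word_prefix j) (word_grow j) (n := n)). Qed.

Lemma lim_word_code j : code_of (m j) (lim_word j).
Proof.
have [_ [Ccl _]] := code_of_legal (legal j).
apply: mem_Pinf_closed Ccl _ _ => n.
  case: (word_ext j n) => _ [k /andP[le_k lt_k] wk] _; exists k; split.
    exact: leq_trans (size_chain (word_grow j) n) le_k.
  by rewrite /pi1 (lim_wordE lt_k).
case: (word_ext j n) => _ _ [y [[Cy wy] _]]; exists y; split=> // i lt_in.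
have lt_i : i < size (word m j n.+1).
  exact: leq_trans (ltnW lt_in : i < n.+1) (size_chain (word_grow j) n.+1).
by rewrite (lim_wordE lt_i); apply: (proj1 (cylP d _ _) wy).
Qed.

Lemma lim_word_fst j n k : k < size (word m j n.+1) -> (lim_word j k).1 = (m (j + n)).2 k.
Proof.
move=> lt_k; case: (word_ext j n) => _ _ [y [[_ wy] <-]].
by rewrite (lim_wordE lt_k) /pi0 -(proj1 (cylP d _ _) wy _ lt_k).
Qed.

Lemma pi0_lim_word j : pi0 (lim_word j) = pi0 (lim_word 0).
Proof.
apply: functional_extensionality => k; rewrite /pi0.
have lt_j : k < size (word m j k.+1) := size_chain (word_grow j) k.+1.
have lt_0 : k < size (word m 0 (j + k).+1).
  exact: leq_trans (leq_addl j k : k < (j + k).+1) (size_chain (word_grow 0) _).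
by rewrite (lim_word_fst lt_j) (lim_word_fst lt_0) add0n.
Qed.

Lemma strategy_wins : exists x, forall i, p2_response strategy m i x.
Proof.
exists (pi0 (lim_word 0)) => i; rewrite p2_responseE => j _.
exists (lim_word j); split; last exact: pi0_lim_word.
split; first exact: lim_word_code.
exact: (cyl_chain_lim d (word_prefix j) (word_grow j)).
Qed.
End LegalRun.

Lemma strong_choquet_of_codes : strong_choquet tau.
Proof.
split; first exact: inhabits (fun _ => s0).
exists strategy; split=> [m k | m legal]; first exact: strategy_legal.
exact: strategy_wins.
Qed.
End StrongChoquet.

Theorem theorem3p1
  (tau B : forall S : finType, pset (pset (nat -> S)))
  (Htop : forall S : finType, 1 < #|S| -> is_topology (tau S))
  (Hbasis : forall S : finType, 1 < #|S| -> is_basis (tau S) (B S))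
  (P1 : forall S : finType, 1 < #|S| -> forall w : seq S, B S (cyl w))
  (P2 : forall S : finType, 1 < #|S| -> forall L1 L2,
      B S L1 -> B S L2 ->
      B S (fun x => L1 x \/ L2 x) /\ B S (fun x => L1 x /\ L2 x))
  (P3 : forall S G : finType, 1 < #|S| -> 1 < #|G| ->
      forall L, B (S * G)%type L -> B S (proj0 L))
  (P4 : forall S : finType, 1 < #|S| -> forall L, B S L ->
      exists C : pset (nat -> S * bool),
        B (S * bool)%type C /\
        (forall z, C z -> Pinf (pi1 z)) /\
        (exists F : pset (nat -> S * bool), cantor_closed F /\
           forall z, C z <-> (F z /\ Pinf (pi1 z))) /\
        (forall sigma, L sigma <-> proj0 C sigma)) :
  forall S : finType, 1 < #|S| -> strong_choquet (tau S).
Proof.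
move=> S S2; have [s0 _] : exists s0 : S, true by apply/card_gt0P; exact: ltnW.
have S2b : 1 < #|{: S * bool}| by rewrite card_prod card_bool muln2 -addnn ltn_addr.
apply: (@strong_choquet_of_codes S s0 _ _ (B (S * bool)%type) (Hbasis S S2)).
- by move=> L1 L2 BL1 BL2; case: (P2 S S2 L1 L2 BL1 BL2).
- by move=> C; apply: P3; rewrite ?card_bool.
- by move=> C w BC; case: (P2 _ S2b C _ BC (P1 _ S2b w)).
- move=> L BL; have [C [BC [_ [[F [Fcl CF] LC]]]]] := P4 S S2 L BL.
  by exists C => //; split=> //; exists F.
Qed.
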